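(* Let $G$ be a graph with adjacency matrix $A$ whose degrees $d=A\mathbf 1$ are all positive, let $e=(i,j)$, $i\ne j$, $a_{ij}>0$, be any edge, and let $r>0$. Then the regularized centrality score satisfies $c_r(e)\ge 0$.
   Context: Graphs are undirected and possibly weighted on vertex set $\{1,\dots,n\}$, with symmetric nonnegative adjacency matrix $A=(a_{k\ell})$; $D=\mathrm{diag}(d)$, $\|d\|_1=\sum_kd_k$, $D^{\pm1/2}=\mathrm{diag}(d_k^{\pm1/2})$; $e_k$ is the $k$-th column of the identity and $\mathbf 1$ the all-ones vector. For $r>0$ and a symmetric nonnegative matrix $B$ with $B\mathbf 1=d$, the regularized Kemeny constant is $K_r(B)=\operatorname{Tr}\Big(\big((1+r)I-D^{-1/2}BD^{-1/2}+\tfrac{1}{\|d\|_1}D^{1/2}\mathbf 1\mathbf 1^TD^{1/2}\big)^{-1}\Big)-(1+r)^{-1}$. With $v=e_i-e_j$ and $\widehat A=A+a_{ij}vv^T$ (deleting edge $e$ and adding loops of weight $a_{ij}$ at $i$ and $j$; note $\widehat A\mathbf 1=d$), the regularized Kemeny-based centrality score is $c_r(e)=K_r(\widehat A)-K_r(A)$. *)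

From mathcomp Require Import all_boot all_order all_algebra.
Set Implicit Arguments. Unset Strict Implicit. Unset Printing Implicit Defensive.
Import Order.TTheory GRing.Theory Num.Theory.
Local Open Scope ring_scope.

Definition deg (R : rcfType) n (B : 'M[R]_n) (k : 'I_n) : R := \sum_l B k l.

Definition vol (R : rcfType) n (B : 'M[R]_n) : R := \sum_k deg B k.

Definition Dhalf (R : rcfType) n (B : 'M[R]_n) : 'M[R]_n :=
  diag_mx (\row_k Num.sqrt (deg B k)).
Definition Dmhalf (R : rcfType) n (B : 'M[R]_n) : 'M[R]_n :=
  diag_mx (\row_k (Num.sqrt (deg B k))^-1).

Definition ones (R : rcfType) n : 'cV[R]_n := const_mx 1.

Definition kemenyMx (R : rcfType) n (r : R) (B : 'M[R]_n) : 'M[R]_n :=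
  (1 + r)%:M - Dmhalf B *m B *m Dmhalf B
  + (vol B)^-1 *: (Dhalf B *m ones R n *m (ones R n)^T *m Dhalf B).

Definition kemeny_reg (R : rcfType) n (r : R) (B : 'M[R]_n) : R :=
  \tr (invmx (kemenyMx r B)) - (1 + r)^-1.

Definition evec (R : rcfType) n (i j : 'I_n) : 'cV[R]_n :=
  \col_k ((k == i)%:R - (k == j)%:R).

Definition Ahat (R : rcfType) n (A : 'M[R]_n) (i j : 'I_n) : 'M[R]_n :=
  A + A i j *: (evec R i j *m (evec R i j)^T).

Definition centrality (R : rcfType) n (r : R) (A : 'M[R]_n) (i j : 'I_n) : R :=
  kemeny_reg r (Ahat A i j) - kemeny_reg r A.

From mathcomp Require Import all_boot all_order all_algebra.
From mathcomp Require Import ring lra.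
Set Implicit Arguments. Unset Strict Implicit. Unset Printing Implicit Defensive.
Import Order.TTheory GRing.Theory Num.Theory.
Local Open Scope ring_scope.

(* Deleting [e] and adding loops of weight [a_ij] at [i] and [j] keeps every
   degree, so the Kemeny matrix [M] of [A] only changes by the rank-one
   downdate [M' = M - a_ij u^T u] with [u = (e_i - e_j)^T D^(-1/2)].  Both [M]
   and [M'] are positive definite, being [r I] plus a normalized Laplacian plus
   a nonnegative multiple of a rank-one square.  By Sherman-Morrison,
   [tr M'^-1 - tr M^-1 = a |u M^-1|^2 / (1 - a u M^-1 u^T)], and positive
   definiteness of [M'] makes the denominator positive. *)

Section QuadraticForm.
Variables (R : realFieldType) (n : nat).
Implicit Types (a : R) (M N : 'M[R]_n) (x u : 'rV[R]_n).

Definition qform M x : R := (x *m M *m x^T) 0 0.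

Definition posdef M := forall x, x != 0 -> 0 < qform M x.

Lemma qformE M x : qform M x = \sum_k \sum_l x 0 k * M k l * x 0 l.
Proof.
rewrite /qform mxE exchange_big; apply: eq_bigr => l _.
by rewrite !mxE mulr_suml; apply: eq_bigr => k _.
Qed.

Lemma qformD M N x : qform (M + N) x = qform M x + qform N x.
Proof. by rewrite /qform mulmxDr mulmxDl mxE. Qed.

Lemma qformZ a M x : qform (a *: M) x = a * qform M x.
Proof. by rewrite /qform -scalemxAr -scalemxAl mxE. Qed.

Lemma qformB M N x : qform (M - N) x = qform M x - qform N x.
Proof. by rewrite -scaleN1r qformD qformZ mulN1r. Qed.

Lemma qform_scalar a x : qform a%:M x = a * \sum_k x 0 k ^+ 2.
Proof.
rewrite /qform mul_mx_scalar -scalemxAl mxE mxE; congr (_ * _).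
by apply: eq_bigr => k _; rewrite mxE expr2.
Qed.

Lemma qform_outer u x : qform (u^T *m u) x = ((x *m u^T) 0 0) ^+ 2.
Proof.
rewrite /qform !mulmxA -mulmxA mxE big_ord1 expr2; congr (_ * _).
by rewrite -[u *m x^T]trmxK trmx_mul trmxK mxE.
Qed.

Lemma posdef_unitmx M : posdef M -> M \in unitmx.
Proof.
move=> pdM; rewrite unitmxE unitfE; apply/negP => /det0P [x x0 xM].
by have := pdM x x0; rewrite /qform xM mul0mx mxE ltxx.
Qed.

Lemma posdef_scalar a : 0 < a -> posdef a%:M.
Proof.
move=> a_gt0 x /rV0Pn[k xk]; rewrite qform_scalar pmulr_rgt0 //.
rewrite (bigD1 k) //= ltr_pwDl ?sumr_ge0 // => [|l _]; last exact: sqr_ge0.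
by rewrite lt0r sqr_ge0 sqrf_eq0 xk.
Qed.

End QuadraticForm.

Lemma invmxB (R : comUnitRingType) n (M N : 'M[R]_n) :
  M \in unitmx -> N \in unitmx ->
  invmx N - invmx M = invmx N *m (M - N) *m invmx M.
Proof.
move=> uM uN; rewrite mulmxBr mulmxBl mulVmx // mul1mx -mulmxA mulmxV //.
by rewrite mulmx1.
Qed.

Lemma mxtrace_invmx_downdate (R : realFieldType) n (M : 'M[R]_n) (u : 'rV[R]_n) a :
  M^T = M -> 0 <= a -> posdef M -> posdef (M - a *: (u^T *m u)) ->
  \tr (invmx M) <= \tr (invmx (M - a *: (u^T *m u))).
Proof.
have [->|u0] := eqVneq u 0; first by rewrite trmx0 mul0mx scaler0 subr0.
set M' := M - _ => sM a_ge0 pdM pdM'.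
set X := invmx M; set Y := invmx M'.
have uM := posdef_unitmx pdM; have uM' := posdef_unitmx pdM'.
have sX : X^T = X by rewrite trmx_inv sM.
set w := u *m X; set q := (w *m u^T) 0 0; set c := 1 - a * q.
have wM : w *m M = u by rewrite -mulmxA mulVmx ?mulmx1.
have w0 : w != 0 by apply: contraNneq u0 => w0; rewrite -wM w0 mul0mx.
have M'Xu : M' *m (X *m u^T) = c *: u^T.
  rewrite mulmxBl mulmxA mulmxV // mul1mx -scalemxAl -!mulmxA [u *m _]mulmxA.
  by rewrite (mx11_scalar (w *m u^T)) mul_mx_scalar scalerA scalerBl scale1r.
have Xuw : X *m u^T = w^T by rewrite trmx_mul sX.
have c_gt0 : 0 < c.
  have qM : qform M w = q by rewrite /qform wM -Xuw mulmxA.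
  have qM' : qform M' w = c * q.
    by rewrite /qform -mulmxA -Xuw M'Xu -scalemxAr mxE.
  by have := pdM' w w0; have := pdM w w0; rewrite qM qM' => /pmulr_lgt0 ->.
have YuT : Y *m u^T = c^-1 *: (X *m u^T).
  rewrite -[X *m u^T]mul1mx -(mulVmx uM') -mulmxA M'Xu -scalemxAr.
  by rewrite scalerA mulVf ?gt_eqF // scale1r.
have dM : M - M' = a *: (u^T *m u) by rewrite /M' opprB addrC subrK.
rewrite -subr_ge0 -raddfB /= invmxB // -/X -/Y dM -scalemxAr -scalemxAl.
rewrite linearZ /= mulr_ge0 // !mulmxA -[_ *m u *m X]mulmxA YuT mxtrace_mulC.
rewrite -scalemxAr linearZ /= mulr_ge0 //; first by rewrite invr_ge0 ltW.
rewrite -/w Xuw trace_mx11 -[w in w *m _]mulmx1 -/(qform 1%:M w).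
by rewrite qform_scalar mul1r; apply: sumr_ge0 => k _; apply: sqr_ge0.
Qed.

Lemma dirichlet_form_ge0 (R : realFieldType) n (B : 'M[R]_n) (y : 'I_n -> R) :
  B^T = B -> (forall k l, 0 <= B k l) ->
  0 <= \sum_k \sum_l B k l * (y k ^+ 2 - y k * y l).
Proof.
move=> symB B_ge0; set T := (X in 0 <= X).
have Tswap : T = \sum_k \sum_l B k l * (y l ^+ 2 - y k * y l).
  rewrite /T exchange_big; apply: eq_bigr => k _; apply: eq_bigr => l _.
  by rewrite -[in LHS]symB mxE mulrC [y l * _]mulrC [_ * (_ - _)]mulrC.
have : T + T = \sum_k \sum_l B k l * (y k - y l) ^+ 2.
  rewrite {2}Tswap -big_split; apply: eq_bigr => k _; rewrite -big_split.
  by apply: eq_bigr => l _ /=; ring.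
have : 0 <= \sum_k \sum_l B k l * (y k - y l) ^+ 2.
  by do 2!apply: sumr_ge0 => ? _; rewrite mulr_ge0 ?sqr_ge0.
lra.
Qed.

Section NormalizedLaplacian.
Variables (R : rcfType) (n : nat) (B : 'M[R]_n).

Lemma normalized_adjE k l :
  (Dmhalf B *m B *m Dmhalf B) k l =
  (Num.sqrt (deg B k))^-1 * B k l * (Num.sqrt (deg B l))^-1.
Proof. by rewrite /Dmhalf mul_diag_mx mul_mx_diag !mxE. Qed.

Lemma qform_normalized_laplacian_ge0 (x : 'rV[R]_n) :
  B^T = B -> (forall k l, 0 <= B k l) -> (forall k, 0 < deg B k) ->
  0 <= qform (1%:M - Dmhalf B *m B *m Dmhalf B) x.
Proof.
move=> symB B_ge0 deg_gt0.
pose s k := Num.sqrt (deg B k); pose y k := x 0 k / s k.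
have s_neq0 k : s k != 0 by rewrite gt_eqF ?sqrtr_gt0.
have deg_s k : deg B k = s k ^+ 2 by rewrite sqr_sqrtr ?ltW.
rewrite qformB qform_scalar mul1r qformE -sumrB.
rewrite (eq_bigr (fun k => \sum_l B k l * (y k ^+ 2 - y k * y l))).
  exact: dirichlet_form_ge0.
move=> k _; have -> : x 0 k ^+ 2 = \sum_l B k l * y k ^+ 2.
  by rewrite -mulr_suml -/(deg B k) deg_s /y; field; exact: s_neq0.
by rewrite -sumrB; apply: eq_bigr => l _; rewrite normalized_adjE /y; ring.
Qed.

End NormalizedLaplacian.

Section KemenyMatrix.
Variables (R : rcfType) (n : nat) (r : R) (B : 'M[R]_n).

Lemma kemenyMx_split :
  kemenyMx r B = r%:M + (1%:M - Dmhalf B *m B *m Dmhalf B)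
    + (vol B)^-1 *: (((ones R n)^T *m Dhalf B)^T *m ((ones R n)^T *m Dhalf B)).
Proof.
rewrite /kemenyMx trmx_mul trmxK /Dhalf tr_diag_mx !mulmxA.
by rewrite raddfD addrA [r%:M + 1%:M]addrC.
Qed.

Lemma kemenyMx_sym : B^T = B -> (kemenyMx r B)^T = kemenyMx r B.
Proof.
move=> symB; rewrite kemenyMx_split !linearD /= linearN linearZ /= !trmx_mul.
by rewrite !tr_scalar_mx !trmxK symB /Dmhalf tr_diag_mx !mulmxA.
Qed.

Lemma kemenyMx_posdef :
  B^T = B -> (forall k l, 0 <= B k l) -> (forall k, 0 < deg B k) -> 0 < r ->
  posdef (kemenyMx r B).
Proof.
move=> symB B_ge0 deg_gt0 r_gt0 x x_neq0.
rewrite kemenyMx_split 2!qformD qformZ qform_outer.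
have := posdef_scalar r_gt0 x_neq0.
have := qform_normalized_laplacian_ge0 x symB B_ge0 deg_gt0.
have vol_inv_ge0 : 0 <= (vol B)^-1.
  by rewrite invr_ge0 sumr_ge0 // => k _; apply: ltW.
have := mulr_ge0 vol_inv_ge0 (sqr_ge0 ((x *m ((ones R n)^T *m Dhalf B)^T) 0 0)).
lra.
Qed.

End KemenyMatrix.

Section EdgeDeletion.
Variables (R : rcfType) (n : nat).
Implicit Types (B : 'M[R]_n) (v : 'cV[R]_n).

Lemma deg_add_outer B a v :
  \sum_k v k 0 = 0 -> deg (B + a *: (v *m v^T)) =1 deg B.
Proof.
move=> v_sum0 k; rewrite /deg; under eq_bigr do rewrite mxE.
rewrite big_split /= -[RHS]addr0; congr (_ + _).
under eq_bigr do rewrite !mxE big_ord1 !mxE mulrA.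
by rewrite -mulr_sumr v_sum0 mulr0.
Qed.

Lemma kemenyMx_add_outer r B a v :
  \sum_k v k 0 = 0 ->
  kemenyMx r (B + a *: (v *m v^T)) =
  kemenyMx r B - a *: ((v^T *m Dmhalf B)^T *m (v^T *m Dmhalf B)).
Proof.
move=> v_sum0; have eq_deg := deg_add_outer B a v_sum0.
have eq_Dmhalf : Dmhalf (B + a *: (v *m v^T)) = Dmhalf B.
  by congr diag_mx; apply/rowP => k; rewrite !mxE eq_deg.
have eq_Dhalf : Dhalf (B + a *: (v *m v^T)) = Dhalf B.
  by congr diag_mx; apply/rowP => k; rewrite !mxE eq_deg.
have eq_vol : vol (B + a *: (v *m v^T)) = vol B.
  by apply: eq_bigr => k _; rewrite eq_deg.
rewrite /kemenyMx eq_Dmhalf eq_Dhalf eq_vol mulmxDr mulmxDl trmx_mul trmxK.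
rewrite /Dmhalf tr_diag_mx -scalemxAr -scalemxAl !mulmxA.
by rewrite opprD addrA [LHS]addrAC.
Qed.

Lemma sum_evec (i j : 'I_n) : \sum_k evec R i j k 0 = 0.
Proof.
have sum_ind (m : 'I_n) : \sum_k ((k == m)%:R : R) = 1.
  by rewrite (bigD1 m) //= eqxx big1 ?addr0 // => k /negbTE ->.
by under eq_bigr do rewrite mxE; rewrite sumrB !sum_ind subrr.
Qed.

Lemma Ahat_sym (A : 'M[R]_n) i j : A^T = A -> (Ahat A i j)^T = Ahat A i j.
Proof. by move=> symA; rewrite linearD linearZ /= trmx_mul trmxK symA. Qed.

Lemma Ahat_ge0 (A : 'M[R]_n) i j :
  A^T = A -> (forall k l, 0 <= A k l) -> forall k l, 0 <= Ahat A i j k l.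
Proof.
move=> symA A_ge0 k l; rewrite !mxE big_ord1 !mxE.
have Aij_ge0 := A_ge0 i j; have Akl_ge0 := A_ge0 k l.
have Aji : A j i = A i j by rewrite -[in LHS]symA mxE.
case ki: (k == i); case kj: (k == j); case li: (l == i); case lj: (l == j) => /=;
  try nra.
- by rewrite (eqP ki) (eqP lj); lra.
- by rewrite (eqP kj) (eqP li) Aji; lra.
Qed.

End EdgeDeletion.

Theorem mainTheorem9 (R : rcfType) (n : nat) (A : 'M[R]_n) (i j : 'I_n) (r : R) :
  A^T = A ->
  (forall k l, 0 <= A k l) ->
  (forall k, 0 < deg A k) ->
  i != j ->
  0 < A i j ->
  0 < r ->
  0 <= centrality r A i j.
Proof.
move=> symA A_ge0 deg_gt0 _ Aij_gt0 r_gt0.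
have hat_deg_gt0 k : 0 < deg (Ahat A i j) k.
  by rewrite deg_add_outer ?sum_evec.
have hat_posdef := kemenyMx_posdef (Ahat_sym i j symA) (Ahat_ge0 i j symA A_ge0)
  hat_deg_gt0 r_gt0.
rewrite /Ahat kemenyMx_add_outer ?sum_evec // in hat_posdef.
rewrite subr_ge0 lerD2r /Ahat kemenyMx_add_outer ?sum_evec //.
apply: mxtrace_invmx_downdate (ltW Aij_gt0) _ hat_posdef.
- exact: kemenyMx_sym.
- exact: kemenyMx_posdef.
Qed.
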